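(* Let $\mathcal{R}$ be a finite valuation ring with residue field of cardinality $q$ and with uniformizer of nilpotency degree $r$ (so $|\mathcal{R}|=q^r$). Let $\mathcal{R}^0$ denote the set of non-units of $\mathcal{R}$. Then there is a constant $c>0$ depending only on $r$ such that for every set $A\subset\mathcal{R}$ with $A\cap\mathcal{R}^0=\emptyset$ and $A\cap(\mathcal{R}^0-1)=\emptyset$ (i.e. every $a\in A$ satisfies that $a$ and $a+1$ are units), \[|A(A+1)|\ \ge\ c\min\left\{\sqrt{q^r|A|},\ \frac{|A|^2}{\sqrt{q^{2r-1}}}\right\},\] where $A(A+1)=\{a(b+1):a,b\in A\}$.
   Context: A finite valuation ring is a finite commutative ring with identity that is local (has a unique maximal ideal) and principal (every ideal is principal); its maximal ideal is generated by a non-unit $z$ (a uniformizer), the residue field $\mathcal{R}/(z)$ has $q$ elements, and $r$ is the least integer with $z^r=0$. $\mathcal{R}^0-1=\{t-1:t\in\mathcal{R}^0\}$. *)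

From HB Require Import structures.
From mathcomp Require Import all_boot all_order all_algebra.
Set Implicit Arguments. Unset Strict Implicit. Unset Printing Implicit Defensive.
Import Order.TTheory GRing.Theory Num.Theory.
Local Open Scope ring_scope.

Section FVR.
Variable R : finComUnitRingType.

Definition is_ideal (I : {set R}) : Prop :=
  [/\ 0 \in I,
      (forall x y, x \in I -> y \in I -> x + y \in I) &
      (forall a x, x \in I -> a * x \in I)].

Definition pideal (g : R) : {set R} := [set a * g | a : R].

Definition is_maximal_ideal (M : {set R}) : Prop :=
  [/\ is_ideal M, M != setT &
      forall J, is_ideal J -> M \subset J -> J = M \/ J = setT].

Definition is_local : Prop :=
  exists M, is_maximal_ideal M /\ forall M', is_maximal_ideal M' -> M' = M.

Definition is_principal_ring : Prop :=
  forall I, is_ideal I -> exists g, I = pideal g.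

Definition finite_valuation_ring : Prop := is_local /\ is_principal_ring.

Definition uniformizer (z : R) : Prop :=
  z \isn't a GRing.unit /\ is_maximal_ideal (pideal z).

(* cardinality of the residue ring R/(z): number of cosets of (z) *)
Definition residue_card (z : R) : nat :=
  #|[set [set x + m | m in pideal z] | x : R]|.

Definition nil_degree (z : R) (r : nat) : Prop :=
  z ^+ r = 0 /\ forall k, (k < r)%N -> z ^+ k != 0.

Definition prodshift (A : {set R}) : {set R} :=
  [set a * (b + 1) | a in A, b in A].

End FVR.

From HB Require Import structures.
From mathcomp Require Import all_boot all_order all_algebra.
From mathcomp Require Import all_reals.
From mathcomp Require Import ring lra.
Import Order.TTheory GRing.Theory Num.Theory.
Local Open Scope ring_scope.
Set Implicit Arguments. Unset Strict Implicit. Unset Printing Implicit Defensive.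

(* Let P = A(A+1). For b, c in A, the line y = ((b+1)/c) x - (b+1) of R^2 passes
   through the point (c(a+1), a(b+1)) of P x P for every a in A, so these |A|^2
   lines have at least |A|^3 incidences with P x P. Conversely, two lines whose
   slopes differ by a unit meet at most once, and for a fixed line the lines whose
   slopes differ from its slope by a non-unit share at most |R| |R^0| points with
   it in total. This bounds the second moment of the number of lines through a
   point, and Cauchy-Schwarz gives
     (|R| I - |P|^2 |L|)^2 <= |P|^2 |R|^3 |L| |R^0|
   for the number I of incidences. As R^0 = (z) has index q in R, |R| = q^r and
   |R^0| <= q^(r-1); together with I >= |A|^3 this yields the bound with c = 1/2. *)

Lemma card_uniform_fibers (T Y : finType) (D : {pred T}) (F : T -> Y) m :
  (forall x, x \in D -> #|[set y in D | F y == F x]| = m) ->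
  #|D| = (#|[set F x | x in D]| * m)%N.
Proof.
move=> Fm; rewrite -sum1_card (partition_big_imset F) /= -sum_nat_const.
apply: eq_bigr => _ /imsetP[x xD ->].
by rewrite -(Fm x xD) -sum1_card; apply: eq_bigl => y; rewrite inE.
Qed.

Section PrincipalIdeals.
Variable R : finComUnitRingType.
Implicit Types a g x y : R.

Lemma pidealP g x : reflect (exists a, x = a * g) (x \in pideal g).
Proof. by apply: (iffP imsetP) => -[a]; exists a. Qed.

Lemma pidealM g a : a * g \in pideal g.
Proof. by apply/pidealP; exists a. Qed.

Lemma pideal0 g : 0 \in pideal g.
Proof. by rewrite -(mul0r g) pidealM. Qed.

Lemma pidealD g x y : x \in pideal g -> y \in pideal g -> x + y \in pideal g.
Proof. by move=> /pidealP[a ->] /pidealP[b ->]; rewrite -mulrDl pidealM. Qed.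

Lemma pidealN g x : x \in pideal g -> - x \in pideal g.
Proof. by move=> /pidealP[a ->]; rewrite -mulNr pidealM. Qed.

Lemma pideal_zero : pideal (0 : R) = [set 0].
Proof.
by apply/setP => x; rewrite inE; apply/pidealP/eqP => [[a ->]|->]; [|exists 0]; rewrite mulr0.
Qed.

Lemma pideal_one : pideal (1 : R) = [set: R].
Proof. by apply/setP => x; rewrite inE; apply/pidealP; exists x; rewrite mulr1. Qed.

Lemma pidealXS_subset g k : pideal (g ^+ k.+1) \subset pideal (g ^+ k).
Proof. by apply/subsetP => _ /pidealP[a ->]; rewrite exprS mulrA pidealM. Qed.

Definition pideal2 g g' : {set R} := [set a * g + b * g' | a : R, b : R].

Lemma pideal2P g g' x : reflect (exists a b, x = a * g + b * g') (x \in pideal2 g g').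
Proof.
apply: (iffP imset2P) => [[a b _ _ ->]|[a [b ->]]]; first by exists a, b.
by exists a b.
Qed.

Lemma pideal2M g g' a b : a * g + b * g' \in pideal2 g g'.
Proof. by apply/pideal2P; exists a, b. Qed.

Lemma pideal2_ideal g g' : is_ideal (pideal2 g g').
Proof.
split.
- by rewrite -[0]addr0 -{1}(mul0r g) -(mul0r g') pideal2M.
- move=> _ _ /pideal2P[a [b ->]] /pideal2P[c [d ->]].
  by rewrite addrACA -!mulrDl pideal2M.
- move=> c _ /pideal2P[a [b ->]].
  by rewrite mulrDr !mulrA pideal2M.
Qed.

Definition pcoset g x : {set R} := [set x + m | m in pideal g].

Lemma mem_pcoset g x w : (w \in pcoset g x) = (w - x \in pideal g).
Proof.
apply/imsetP/idP => [[m mJ ->]|wJ]; first by rewrite addrC addKr.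
by exists (w - x) => //; rewrite addrC subrK.
Qed.

Lemma card_pcoset g x : #|pcoset g x| = #|pideal g|.
Proof. exact/card_imset/addrI. Qed.

Lemma eq_pcoset g x y : (pcoset g y == pcoset g x) = (y - x \in pideal g).
Proof.
apply/eqP/idP => [e|yx].
  by have := mem_pcoset g y y; rewrite subrr pideal0 e mem_pcoset.
apply/setP => w; rewrite !mem_pcoset; apply/idP/idP => h.
  have <- : (w - y) + (y - x) = w - x by rewrite addrA subrK.
  exact: pidealD.
have <- : (w - x) - (y - x) = w - y by rewrite opprB addrA subrK.
by rewrite pidealD ?pidealN.
Qed.

End PrincipalIdeals.

Lemma unitr1B_nilpotent (R : comUnitRingType) (y : R) n :
  y ^+ n = 0 -> 1 - y \is a GRing.unit.
Proof.
move=> yn; apply/unitrPr; exists (\sum_(i < n) y ^+ i).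
by rewrite -opprB mulNr -subrX1 yn sub0r opprK.
Qed.

Definition nonunits (R : finComUnitRingType) : {set R} := [set x | x \isn't a GRing.unit].

Section Uniformizer.
Variables (R : finComUnitRingType) (z : R) (r : nat).
Hypotheses (z_unif : uniformizer z) (z_nil : nil_degree z r).

Lemma nil_degree_gt0 : (0 < r)%N.
Proof. by case: z_nil; case: r => // /eqP; rewrite expr0 oner_eq0. Qed.

Lemma nonunit_pideal x : x \isn't a GRing.unit -> x \in pideal z.
Proof.
move=> xN; have [_ _ z_max] := z_unif.2.
have zJ : pideal z \subset pideal2 z x.
  by apply/subsetP => _ /pidealP[a ->]; have := pideal2M z x a 0; rewrite mul0r addr0.
have [<-|JT] := z_max _ (pideal2_ideal z x) zJ.
  by have := pideal2M z x 0 1; rewrite mul0r add0r mul1r.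
(* Otherwise 1 = a z + b x, and b x = 1 - a z would be a unit since z is nilpotent. *)
have /pideal2P[a [b e1]] : 1 \in pideal2 z x by rewrite JT inE.
have : 1 - a * z \is a GRing.unit.
  by apply: (@unitr1B_nilpotent _ _ r); rewrite exprMn z_nil.1 mulr0.
by rewrite e1 addrC addKr unitrM (negbTE xN) andbF.
Qed.

Lemma mulX_pidealXS k d : (k < r)%N ->
  (d * z ^+ k \in pideal (z ^+ k.+1)) = (d \in pideal z).
Proof.
move=> kr; apply/idP/idP => [/pidealP[b e]|/pidealP[b ->]]; last first.
  by rewrite -mulrA -exprS pidealM.
(* d z^k = b z^(k+1) makes d - b z a zero divisor, as z^k != 0 for k < r. *)
suff /pidealD/(_ (pidealM z b)) : d - b * z \in pideal z by rewrite subrK.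
apply: nonunit_pideal; apply: contraTN (z_nil.2 k kr) => u.
by rewrite negbK -(mulKr u (z ^+ k)) mulrBl e exprS mulrA subrr mulr0.
Qed.

Lemma card_nonunits_le_pideal : (#|nonunits R| <= #|pideal z|)%N.
Proof. by apply/subset_leq_card/subsetP => x; rewrite inE; exact: nonunit_pideal. Qed.

Lemma card_residue : #|R| = (residue_card z * #|pideal z|)%N.
Proof.
apply: card_uniform_fibers => x _; rewrite -(card_pcoset z x).
by apply: eq_card => y; rewrite !inE eq_pcoset mem_pcoset.
Qed.

(* [x |-> layer k x] induces a bijection from R/(z) onto (z^k)/(z^(k+1)). *)
Definition layer k x := pcoset (z ^+ k.+1) (x * z ^+ k).

Lemma card_layers k : (k < r)%N -> #|[set layer k x | x : R]| = residue_card z.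
Proof.
move=> kr; have z_gt0 : (0 < #|pideal z|)%N by apply/card_gt0P; exists 0; exact: pideal0.
apply/eqP; rewrite -(eqn_pmul2r z_gt0) -card_residue; apply/eqP/esym.
apply: card_uniform_fibers => x _; rewrite -(card_pcoset z x).
by apply: eq_card => y; rewrite !inE eq_pcoset mem_pcoset -mulrBl mulX_pidealXS.
Qed.

Lemma card_pidealX_layers k :
  #|pideal (z ^+ k)| = (#|[set layer k x | x : R]| * #|pideal (z ^+ k.+1)|)%N.
Proof.
have -> : [set layer k x | x : R] = [set pcoset (z ^+ k.+1) y | y in pideal (z ^+ k)].
  apply/setP => C; apply/imsetP/imsetP => [[x _ ->]|[_ /pidealP[a ->] ->]].
    by exists (x * z ^+ k) => //; rewrite pidealM.
  by exists a.
apply: card_uniform_fibers => y yz; rewrite -(card_pcoset (z ^+ k.+1) y).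
apply: eq_card => w; rewrite !inE eq_pcoset mem_pcoset andb_idl // => wy.
by rewrite -(subrK y w) pidealD // (subsetP (pidealXS_subset z k)).
Qed.

Lemma card_pidealXS k : (k < r)%N ->
  #|pideal (z ^+ k)| = (residue_card z * #|pideal (z ^+ k.+1)|)%N.
Proof. by move=> kr; rewrite card_pidealX_layers card_layers. Qed.

Lemma card_pidealX j : (j <= r)%N -> #|pideal (z ^+ (r - j))| = (residue_card z ^ j)%N.
Proof.
elim: j => [_|j IHj jr]; first by rewrite subn0 z_nil.1 pideal_zero cards1.
rewrite card_pidealXS ?ltn_subrL ?nil_degree_gt0 // subnSK // IHj ?expnS //.
exact: ltnW.
Qed.

Lemma card_fvr : #|R| = (residue_card z ^ r)%N.
Proof. by rewrite -card_pidealX // subnn expr0 pideal_one cardsT. Qed.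

Lemma card_nonunits : (#|nonunits R| <= residue_card z ^ (r - 1))%N.
Proof.
by rewrite -card_pidealX ?leq_subr // subKn ?nil_degree_gt0 // card_nonunits_le_pideal.
Qed.

End Uniformizer.

Lemma sqr_sum_le (K : realFieldType) (T : finType) (P : {pred T}) (g : T -> K) :
  (\sum_(i in P) g i) ^+ 2 <= #|P|%:R * \sum_(i in P) g i ^+ 2.
Proof.
set a := \sum_(i in P) g i; set b := \sum_(i in P) g i ^+ 2; set n : K := #|P|%:R.
have sqB x y : (x - y) ^+ 2 = x ^+ 2 + y ^+ 2 - 2 * x * y :> K by ring.
have inner i : \sum_(j in P) (g i - g j) ^+ 2 = n * g i ^+ 2 + b - 2 * g i * a.
  rewrite /a /b /n; under eq_bigr => j _ do rewrite sqB.
  by rewrite !big_split /= sumr_const sumrN -big_distrr /= mulr_natl; ring.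
have sum_inner : \sum_(i in P) \sum_(j in P) (g i - g j) ^+ 2 = 2 * (n * b - a ^+ 2).
  under eq_bigr => i _ do rewrite inner.
  rewrite !big_split /= sumr_const sumrN -!big_distrr /= -big_distrl /= -big_distrr /=.
  by rewrite -/a -/b mulr_natl; ring.
have : 0 <= \sum_(i in P) \sum_(j in P) (g i - g j) ^+ 2.
  by do 2!apply: sumr_ge0 => ? _; exact: sqr_ge0.
by rewrite sum_inner pmulr_rge0 // subr_ge0.
Qed.

Lemma sum_indicator (T : finType) (c : T) : (\sum_(y : T) (y == c : nat))%N = 1%N.
Proof. by rewrite (bigD1 c) //= eqxx big1 // => y /negbTE ->. Qed.

Lemma sum_indicator2 (T : finType) (c c' : T) :
  (\sum_(y : T) ((y == c) * (y == c') : nat))%N = (c == c').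
Proof. by rewrite (bigD1 c) //= eqxx mul1n big1 ?addn0 // => y /negbTE ->. Qed.

Section Incidences.
Variable R : finComUnitRingType.
Implicit Types (p l : R * R).

(* The pair l = (m, k) encodes the line y = m x - k. *)
Definition on_line p l : bool := p.2 == l.1 * p.1 - l.2.

Definition common_points l l' : nat :=
  \sum_(x : R) (l.1 * x - l.2 == l'.1 * x - l'.2)%R.

Lemma sum_pair (F : R * R -> nat) :
  (\sum_p F p = \sum_(x : R) \sum_(y : R) F (x, y))%N.
Proof. by rewrite pair_big; apply: eq_bigr => -[]. Qed.

Lemma sum_on_line l : (\sum_p on_line p l)%N = #|R|.
Proof.
rewrite sum_pair (eq_bigr (fun=> 1%N)) => [|x _]; last exact: sum_indicator (l.1 * x - l.2).
exact: sum1_card.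
Qed.

Lemma sum_on_line2 l l' : (\sum_p on_line p l * on_line p l')%N = common_points l l'.
Proof.
rewrite sum_pair; apply: eq_bigr => x _.
exact: sum_indicator2 (l.1 * x - l.2) (l'.1 * x - l'.2).
Qed.

Lemma common_points_unit l l' : l.1 - l'.1 \is a GRing.unit -> (common_points l l' <= 1)%N.
Proof.
set d := l.1 - l'.1 => du.
rewrite -(sum_indicator (d^-1 * (l.2 - l'.2))); apply: leq_sum => x _.
case: eqP => // e; rewrite -[x](mulKr du) (_ : d * x = l.2 - l'.2) ?eqxx //.
by apply/eqP; rewrite -subr_eq0 -(subrr (l.1 * x - l.2)) {2}e /d; apply/eqP; ring.
Qed.

Lemma card_nonunits_shift m :
  #|[set m' : R | m - m' \isn't a GRing.unit]| = #|nonunits R|.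
Proof.
have -> : [set m' : R | m - m' \isn't a GRing.unit] = [set m - u | u in nonunits R].
  apply/setP => m'; rewrite inE; apply/idP/imsetP => [m'N|[u]].
    by exists (m - m'); rewrite ?inE // opprB addrC subrK.
  by rewrite inE => uN ->; rewrite opprB addrC subrK.
by apply: card_imset => u v /addrI/oppr_inj.
Qed.

Lemma sum_common_points_nonunit l :
  (\sum_(l' | (l.1 - l'.1 \isn't a GRing.unit)%R) common_points l l'
     <= #|R| * #|nonunits R|)%N.
Proof.
have sum1R : #|R| = (\sum_(x : R) 1)%N by rewrite -sum1_card.
rewrite /common_points exchange_big /= sum1R big_distrl /=; apply: leq_sum => x _.
rewrite mul1n -(card_nonunits_shift l.1) -sum1_card.
rewrite (eq_bigl (fun l' => (l.1 - l'.1 \isn't a GRing.unit)%R && true)) => [|l'];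
  last by rewrite andbT.
rewrite -(pair_big_dep (fun m' => (l.1 - m' \isn't a GRing.unit)%R) (fun _ _ => true)
  (fun m' k' => ((l.1 * x - l.2 == m' * x - k')%R : nat))) /=.
rewrite [X in (_ <= X)%N](eq_bigl (fun m' => (l.1 - m' \isn't a GRing.unit)%R)) => [|m'];
  last by rewrite inE.
(* At a fixed abscissa x, each slope m' leaves exactly one admissible intercept k'. *)
apply: leq_sum => m' _.
rewrite (eq_bigr (fun k' => ((k' == m' * x - (l.1 * x - l.2))%R : nat))) ?sum_indicator // => k' _.
by congr nat_of_bool; apply/eqP/eqP => e; rewrite e; ring.
Qed.

Variable Ls : {set R * R}.

Definition line_degree p : nat := \sum_(l in Ls) on_line p l.

Lemma sum_line_degree : (\sum_p line_degree p)%N = (#|R| * #|Ls|)%N.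
Proof.
rewrite exchange_big /= mulnC -sum_nat_const; apply: eq_bigr => l _.
exact: sum_on_line.
Qed.

Lemma sum_line_degree_sqr :
  (\sum_p line_degree p ^ 2 <= #|Ls| * (#|Ls| + #|R| * #|nonunits R|))%N.
Proof.
have -> : (\sum_p line_degree p ^ 2 = \sum_(l in Ls) \sum_(l' in Ls) common_points l l')%N.
  under eq_bigr => p _ do rewrite -mulnn big_distrl /= (eq_bigr _ (fun l _ => big_distrr _ _ _)).
  rewrite exchange_big /=; apply: eq_bigr => l _.
  by rewrite exchange_big /=; apply: eq_bigr => l' _; exact: sum_on_line2.
rewrite -sum_nat_const; apply: leq_sum => l _.
rewrite (bigID (fun l' => (l.1 - l'.1 \is a GRing.unit)%R)) /=; apply: leq_add.
  apply: (@leq_trans (\sum_(l' in Ls | (l.1 - l'.1 \is a GRing.unit)%R) 1)%N).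
    by apply: leq_sum => l' /andP[_]; exact: common_points_unit.
  by rewrite sum1dep_card subset_leq_card //; apply/subsetP => l'; rewrite inE => /andP[].
apply: leq_trans (sum_common_points_nonunit l).
rewrite big_mkcond [X in (_ <= X)%N]big_mkcond /=; apply: leq_sum => l' _.
by case: (l' \in Ls) => //=; case: ifP.
Qed.
End Incidences.

Lemma sum_line_degree_dev (R : finComUnitRingType) (Ls : {set R * R}) (K : realFieldType) :
  \sum_(p : R * R) ((#|R|%:R : K) * (line_degree Ls p)%:R - #|Ls|%:R) ^+ 2
    <= (#|R|%:R : K) ^+ 3 * #|Ls|%:R * #|nonunits R|%:R.
Proof.
set N : K := #|R|%:R; set L : K := #|Ls|%:R; set nu : K := #|nonunits R|%:R.
have sqE p : (N * (line_degree Ls p)%:R - L) ^+ 2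
    = N ^+ 2 * (line_degree Ls p ^ 2)%:R - 2 * N * L * (line_degree Ls p)%:R + L ^+ 2.
  by rewrite natrX; ring.
under eq_bigr do rewrite sqE.
rewrite big_split /= sumr_const card_prod -[L ^+ 2 *+ _]mulr_natr natrM -/N.
rewrite sumrB -!big_distrr /= -!natr_sum sum_line_degree natrM -/N -/L.
set F2 : K := (\sum_p line_degree Ls p ^ 2)%N%:R.
have deg2 : F2 <= L * (L + N * nu).
  by have := sum_line_degree_sqr Ls; rewrite -(ler_nat K) natrM natrD natrM.
rewrite (_ : N ^+ 3 * L * nu
    = N ^+ 2 * (L * (L + N * nu)) - 2 * N * L * (N * L) + L ^+ 2 * (N * N)); last by ring.
by rewrite !lerD2r ler_wpM2l ?sqr_ge0.
Qed.

Definition incidences (R : finComUnitRingType) (Ps Ls : {set R * R}) :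
  {set (R * R) * (R * R)} :=
  [set pl | [&& pl.1 \in Ps, pl.2 \in Ls & on_line pl.1 pl.2]].

Lemma card_incidences (R : finComUnitRingType) (Ps Ls : {set R * R}) :
  #|incidences Ps Ls| = (\sum_(p in Ps) line_degree Ls p)%N.
Proof.
transitivity (\sum_(p in Ps) \sum_(l in Ls | on_line p l) 1)%N; last first.
  apply: eq_bigr => p _; rewrite big_mkcondr.
  by apply: eq_bigr => l _; case: on_line.
by rewrite pair_big_dep /= sum1_card; apply: eq_card => pl; rewrite inE.
Qed.

Lemma incidence_bound (R : finComUnitRingType) (Ps Ls : {set R * R}) (K : realFieldType) :
  ((#|R|%:R : K) * #|incidences Ps Ls|%:R - #|Ps|%:R * #|Ls|%:R) ^+ 2
    <= #|Ps|%:R * ((#|R|%:R : K) ^+ 3 * #|Ls|%:R * #|nonunits R|%:R).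
Proof.
rewrite card_incidences.
set g := fun p => (#|R|%:R : K) * (line_degree Ls p)%:R - #|Ls|%:R.
have -> : (#|R|%:R : K) * (\sum_(p in Ps) line_degree Ls p)%N%:R - #|Ps|%:R * #|Ls|%:R
    = \sum_(p in Ps) g p.
  by rewrite sumrB sumr_const natr_sum big_distrr /= mulr_natl.
apply: le_trans (sqr_sum_le _ _) _; apply: ler_wpM2l => //.
apply: le_trans (sum_line_degree_dev Ls K).
rewrite [X in _ <= X](bigID (mem Ps)) /= lerDl.
by apply: sumr_ge0 => p _; exact: sqr_ge0.
Qed.

Section SumProductLines.
Variables (R : finComUnitRingType) (A : {set R}).
Hypothesis A_units : forall a, a \in A -> a \is a GRing.unit /\ a + 1 \is a GRing.unit.

Definition line_of (bc : R * R) : R * R := ((bc.1 + 1) / bc.2, bc.1 + 1).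

Definition prodshift_lines : {set R * R} := [set line_of bc | bc in setX A A].

Definition prodshift_points : {set R * R} := setX (prodshift A) (prodshift A).

Lemma line_of_inj : {in setX A A &, injective line_of}.
Proof.
move=> [b c] [b' c']; rewrite !inE /= => /andP[bA cA] /andP[_ _] [e1 /addIr eb].
subst b'; congr (_, _); apply: invr_inj; exact: (mulrI (A_units bA).2).
Qed.

Lemma card_prodshift_lines : #|prodshift_lines| = (#|A| * #|A|)%N.
Proof. by rewrite card_in_imset ?cardsX //; exact: line_of_inj. Qed.

Definition triple_incidence (t : R * R * R) : (R * R) * (R * R) :=
  let: (a, b, c) := t in ((c * (a + 1), a * (b + 1)), line_of (b, c)).

Lemma triple_incidence_inj : {in setX (setX A A) A &, injective triple_incidence}.
Proof.
move=> [[a b] c] [[a' b'] c']; rewrite !inE /=.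
move=> /andP[/andP[_ bA] cA] /andP[/andP[_ b'A] c'A] e.
have e_line : line_of (b, c) = line_of (b', c') := congr1 snd e.
have e_pt : c * (a + 1) = c' * (a' + 1) := congr1 (fun x => x.1.1) e.
have [eb ec] : (b, c) = (b', c') by apply: line_of_inj; rewrite // !inE ?bA ?cA ?b'A ?c'A.
subst b' c'; congr (_, _, _); apply: (addIr 1); exact: (mulrI (A_units cA).1 e_pt).
Qed.

Lemma triple_incidence_mem : {in setX (setX A A) A,
  forall t, triple_incidence t \in incidences prodshift_points prodshift_lines}.
Proof.
move=> [[a b] c]; rewrite !inE /= => /andP[/andP[aA bA] cA].
apply/and3P; split.
- by rewrite /=; apply/andP; split; apply/imset2P; [exists c a | exists a b].
- by apply: imset_f; rewrite inE bA cA.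
- by rewrite /on_line /line_of /= mulrA divrK ?(A_units cA).1 //; apply/eqP; ring.
Qed.

Lemma card_prodshift_incidences : (#|A| ^ 3 <= #|incidences prodshift_points prodshift_lines|)%N.
Proof.
have <- : #|[set triple_incidence t | t in setX (setX A A) A]| = (#|A| ^ 3)%N.
  rewrite card_in_imset; last exact: triple_incidence_inj.
  by rewrite !cardsX !expnS expn0 muln1 mulnA.
by apply/subset_leq_card/subsetP => _ /imsetP[t tA ->]; exact: triple_incidence_mem.
Qed.

End SumProductLines.

Lemma sqrt_le_double (K : rcfType) (x s : K) : 0 <= s -> x <= 4 * s ^+ 2 ->
  Num.sqrt x <= 2 * s.
Proof.
move=> s0 xs; rewrite -(ger0_norm (_ : 0 <= 2 * s)) ?mulr_ge0 // -sqrtr_sqr.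
by rewrite ler_sqrt ?sqr_ge0 // exprMn (_ : 2 ^+ 2 = 4) //; ring.
Qed.

Lemma sqr_div_sqrt_le (K : rcfType) (a s N Q I : K) :
  0 < a -> 0 <= s -> 0 < N -> 0 < Q -> a ^+ 3 <= I -> 4 * s ^+ 2 < N * a ->
  (N * I - s ^+ 2 * a ^+ 2) ^+ 2 <= s ^+ 2 * (N ^+ 2 * a ^+ 2 * Q) ->
  a ^+ 2 / Num.sqrt Q <= 2 * s.
Proof.
move=> a0 s0 N0 Q0 aI sNa dev.
(* Here the main term N I dominates: N I - s^2 a^2 >= (3/4) N a^3. *)
have u0 : 0 < Num.sqrt Q by rewrite sqrtr_gt0.
have main_term : 3 / 4 * (N * a ^+ 3) <= N * I - s ^+ 2 * a ^+ 2.
  have : 4 * s ^+ 2 * a ^+ 2 < N * a * a ^+ 2 by rewrite ltr_pM2r ?exprn_gt0.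
  have : N * a ^+ 3 <= N * I by rewrite ler_wpM2l // ltW.
  lra.
have main_ge0 : 0 <= 3 / 4 * (N * a ^+ 3).
  by rewrite mulr_ge0 ?mulr_ge0 ?exprn_ge0 ?ltW //; lra.
have : (3 / 4 * a ^+ 2) ^+ 2 <= (s * Num.sqrt Q) ^+ 2.
  rewrite -(ler_pM2l (_ : 0 < N ^+ 2 * a ^+ 2)) ?mulr_gt0 ?exprn_gt0 //.
  rewrite (_ : _ * (s * _) ^+ 2 = s ^+ 2 * (N ^+ 2 * a ^+ 2 * Q)); last first.
    by rewrite -[Q in RHS]sqr_sqrtr ?ltW //; ring.
  apply: le_trans dev; rewrite (_ : _ * _ ^+ 2 = (3 / 4 * (N * a ^+ 3)) ^+ 2); last by ring.
  by rewrite ler_sqr ?nnegrE // (le_trans main_ge0).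
have n1 : 0 <= 3 / 4 * a ^+ 2 by rewrite mulr_ge0 ?exprn_ge0 ?ltW //; lra.
have n2 : 0 <= s * Num.sqrt Q by rewrite mulr_ge0 ?sqrtr_ge0.
rewrite ler_sqr ?nnegrE // => le34.
by rewrite ler_pdivrMr //; lra.
Qed.

Lemma half_min_le (K : rcfType) (a s N Q nu I : K) :
  0 <= a -> 0 <= s -> 0 < N -> 0 < Q -> N * nu <= Q -> a ^+ 3 <= I ->
  (N * I - s ^+ 2 * a ^+ 2) ^+ 2 <= s ^+ 2 * (N ^+ 3 * a ^+ 2 * nu) ->
  2^-1 * Num.min (Num.sqrt (N * a)) (a ^+ 2 / Num.sqrt Q) <= s.
Proof.
move=> a0 s0 N0 Q0 nuQ aI dev.
rewrite mulrC ler_pdivrMr // [s * 2]mulrC.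
have [->|a_neq0] := eqVneq a 0.
  by rewrite expr0n /= mul0r ge_min mulr0 sqrtr0 mulr_ge0 ?orbT.
have a_gt0 : 0 < a by rewrite lt_def a_neq0.
have [Nas|sNa] := lerP (N * a) (4 * s ^+ 2).
  by rewrite ge_min sqrt_le_double.
rewrite ge_min (sqr_div_sqrt_le a_gt0 s0 N0 Q0 aI sNa) ?orbT //.
apply: le_trans dev _; rewrite ler_wpM2l ?sqr_ge0 //.
rewrite (_ : _ * nu = N ^+ 2 * a ^+ 2 * (N * nu)); last by ring.
by rewrite ler_wpM2l // mulr_ge0 ?exprn_ge0 // ltW.
Qed.

Unset Implicit Arguments.

Theorem corollary1p11 (K : realType) (r : nat) :
  exists c : K, 0 < c /\
  forall (R : finComUnitRingType) (z : R) (q : nat),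
    finite_valuation_ring R -> uniformizer z -> nil_degree z r ->
    q = residue_card z ->
    forall A : {set R},
      (forall a, a \in A -> a \is a GRing.unit /\ a + 1 \is a GRing.unit) ->
      c * Num.min (Num.sqrt ((q ^ r * #|A|)%:R))
                  ((#|A| ^ 2)%:R / Num.sqrt ((q ^ (2 * r - 1))%:R))
        <= (#|prodshift A|)%:R.
Proof.
exists 2^-1; split; first by rewrite invr_gt0 ltr0n.
move=> R z _ _ z_unif z_nil -> A A_units.
have q_gt0 : (0 < residue_card z)%N.
  have : (0 < #|R|)%N by apply/card_gt0P; exists 0.
  by rewrite (card_fvr z_unif z_nil) expn_gt0 eqn0Ngt (nil_degree_gt0 z_nil) orbF.
have bound := incidence_bound (prodshift_points A) (prodshift_lines A) K.
rewrite cardsX (card_prodshift_lines A_units) (card_fvr z_unif z_nil) in bound.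
rewrite !natrM !natrX -!expr2 in bound.
rewrite natrM !natrX; apply: half_min_le bound; rewrite ?ler0n ?exprn_gt0 ?ltr0n //.
- have -> : (2 * r - 1 = r + (r - 1))%N by rewrite mul2n -addnn addnBA ?(nil_degree_gt0 z_nil).
  rewrite -!natrX -natrM ler_nat expnD leq_mul2l.
  by rewrite (card_nonunits z_unif z_nil) orbT.
- by rewrite -natrX ler_nat (card_prodshift_incidences A_units).
Qed.
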